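(* Let $d\ge 2$ and $1\le r<d$. Let $h(x)=\mathrm{ReLU}(\Gamma^*W^*x+\beta^* )$ be a one-layer ReLU network, where $x\in\mathbb{R}^d$, $\Gamma^*\in\mathbb{R}^{d\times d}$ is diagonal, $\beta^*\in\mathbb{R}^d$, and $W^*\in\mathbb{R}^{d\times d}$ has rank $r$. Consider the four-layer network $$f(x)=\mathrm{ReLU}\Big(\Gamma_4W_4\,\mathrm{ReLU}\big(\Gamma_3W_3\,\mathrm{ReLU}(\Gamma_2W_2\,\mathrm{ReLU}(\Gamma_1W_1x+\beta_1)+\beta_2)+\beta_3\big)+\beta_4\Big),$$ with layer widths $d\to dr\to r\to dr\to d$. Concretely: - $W_1\in\mathbb{R}^{dr\times d}$, $W_2\in\mathbb{R}^{r\times dr}$, $W_3\in\mathbb{R}^{dr\times r}$, $W_4\in\mathbb{R}^{d\times dr}$ are random and frozen; - $\Gamma_1,\Gamma_2,\Gamma_3,\Gamma_4$ are diagonal of sizes $dr,r,dr,d$ respectively; - $\beta_1,\beta_2,\beta_3,\beta_4$ are vectors of the corresponding sizes; - the $\Gamma_i,\beta_i$ are tunable. Then, with probability $1$ over the draw of $W_1,\dots,W_4$, there exist $\Gamma_1,\dots,\Gamma_4,\beta_1,\dots,\beta_4$ such that $f(x)=h(x)$ for all $x\in\mathbb{R}^d$ with $\|x\|_2\le1$.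
   Context: $\mathrm{ReLU}(t)=\max(t,0)$ is applied entrywise. ''Random'' weight matrices have independent, identically distributed entries drawn from an arbitrary continuous and bounded distribution, independently across matrices. The diagonal matrices $\Gamma_i$ and vectors $\beta_i$ are the (tunable) scale and shift parameters of normalization layers. *)

From HB Require Import structures.
From mathcomp Require Import all_boot all_order all_algebra.
From mathcomp Require Import all_classical all_reals all_analysis.
Set Implicit Arguments. Unset Strict Implicit. Unset Printing Implicit Defensive.
Import Order.TTheory GRing.Theory Num.Theory.
Local Open Scope classical_set_scope.
Local Open Scope ring_scope.

Definition relu_vec (R : realType) (n : nat) (v : 'cV[R]_n) : 'cV[R]_n :=
  \col_i Num.max (v i 0) 0.

Definition nlayer (R : realType) (m n : nat) (g : 'rV[R]_m) (W : 'M[R]_(m, n))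
  (b : 'cV[R]_m) (x : 'cV[R]_n) : 'cV[R]_m :=
  relu_vec (diag_mx g *m W *m x + b).

Definition sqnorm (R : realType) (n : nat) (x : 'cV[R]_n) : R :=
  \sum_i (x i 0) ^+ 2.

(* index type of all entries of W1, W2, W3, W4 *)
Definition entry_idx (d r : nat) : finType :=
  ((('I_(d * r) * 'I_d) + ('I_r * 'I_(d * r))) +
   (('I_(d * r) * 'I_r) + ('I_d * 'I_(d * r))))%type.

Section Rand.
Context (R : realType) (d r : nat) (T : Type) (X : entry_idx d r -> T -> R).
Definition W1_of (w : T) : 'M[R]_(d * r, d) :=
  \matrix_(i, j) X (inl (inl (i, j))) w.
Definition W2_of (w : T) : 'M[R]_(r, d * r) :=
  \matrix_(i, j) X (inl (inr (i, j))) w.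
Definition W3_of (w : T) : 'M[R]_(d * r, r) :=
  \matrix_(i, j) X (inr (inl (i, j))) w.
Definition W4_of (w : T) : 'M[R]_(d, d * r) :=
  \matrix_(i, j) X (inr (inr (i, j))) w.
End Rand.

Definition mutually_independent (dm : measure_display) (Omega : measurableType dm)
  (R : realType) (P : probability Omega R) (I : finType) (X : I -> Omega -> R) :=
  forall B : I -> set R, (forall k, measurable (B k)) ->
    P (\bigcap_(k in [set: I]) (X k @^-1` B k)) = (\prod_(k : I) P (X k @^-1` B k))%E.

Definition has_law (dm : measure_display) (Omega : measurableType dm)
  (R : realType) (P : probability Omega R) (Y : Omega -> R)
  (mu : probability R R) :=
  forall B : set R, measurable B -> P (Y @^-1` B) = mu B.

Definition continuous_bounded_law (R : realType) (mu : probability R R) :=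
  mu `<< (@lebesgue_measure R) /\ exists M : R, mu [set` `[- M, M]%R] = 1%E.

From HB Require Import structures.
From mathcomp Require Import all_boot all_order all_algebra.
From mathcomp Require Import all_classical all_reals all_analysis.
From mathcomp Require Import lra.
Import Order.TTheory GRing.Theory Num.Theory.
Local Open Scope classical_set_scope.
Local Open Scope ring_scope.

(* Write W* = C B with C : d x r and B : r x d.  The map g |-> W2 diag(g) W1 is
   linear from R^(dr) to the r x d matrices, a space of the same dimension; its
   matrix [sandwich_mx] has a determinant that is a polynomial in the entries of
   W1, W2, and that polynomial is not identically zero (it equals 1 at suitable
   0/1 weights).  The zero set of such a polynomial is null for the product of
   atomless laws, so almost surely some g1 gives W2 diag(g1) W1 = B, and
   likewise some g3 gives W4 diag(g3) W3 = diag(g* ) C.  Large biases then make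
   the first three ReLUs act as affine maps on the bounded inputs, and the last
   bias absorbs the accumulated constant. *)

Section ProductLaw.
Context (R : realType) (mu : probability R R).

(* R^n realised as the nested product (..((R * R) * R)..) * R with n + 1
   factors; the innermost factor is a dummy coordinate. *)
Fixpoint pow_space (n : nat) : {d : measure_display & measurableType d} :=
  match n with
  | 0 => existT (fun d => measurableType d) _ R
  | S n => existT (fun d => measurableType d) _ (projT2 (pow_space n) * R)%type
  end.
Definition Rpow n := projT2 (pow_space n).

Fixpoint pow_law (n : nat) : probability (Rpow n) R :=
  match n return probability (Rpow n) R with
  | 0 => (\d_(0:R) : probability R R)
  | S n => ((pow_law n) \x mu)%E : probability (Rpow n * R)%type R
  end.

(* The i-th real coordinate of a point of Rpow n (0 when i >= n). *)
Fixpoint coord (n i : nat) : Rpow n -> R :=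
  match n return Rpow n -> R with
  | 0 => fun _ => 0
  | S n => fun y => if i == n then y.2 else coord n i y.1
  end.

Fixpoint pow_pt (n : nat) (v : nat -> R) : Rpow n :=
  match n return Rpow n with 0 => (0:R) | S n => (pow_pt n v, v n) end.

Lemma coord_pow_pt n v i : (i < n)%N -> coord n i (pow_pt n v) = v i.
Proof.
elim: n => [//|n IH] hi /=.
case: eqP => [->//|/eqP ne]; apply: IH.
by move: hi; rewrite ltnS leq_eqVlt (negbTE ne).
Qed.

End ProductLaw.

Section RecursivePolynomials.
Context {R : realType}.

(* [rpoly n F]: F is a polynomial function on Rpow n, presented recursively as
   a polynomial in the last coordinate whose coefficients are [rpoly]s in the
   earlier ones.  This presentation is the one suited to Fubini's theorem. *)
Fixpoint rpoly (n : nat) : (Rpow R n -> R) -> Prop :=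
  match n return (Rpow R n -> R) -> Prop with
  | 0 => fun F => exists c, forall y, F y = c
  | S n => fun F => exists (J : finType) (c : J -> Rpow R n -> R) (e : J -> nat),
      (forall j, rpoly n (c j)) /\ forall y t, F (y, t) = \sum_(j : J) c j y * t ^+ e j
  end.

Lemma rpoly_const n a : rpoly n (fun _ => a).
Proof.
elim: n a => [|n IH] a; first by exists a.
exists 'I_1, (fun _ _ => a), (fun _ => 0%N); split => // y t.
by rewrite big_ord1 expr0 mulr1.
Qed.

Lemma rpoly_add n F G : rpoly n F -> rpoly n G -> rpoly n (fun y => F y + G y).
Proof.
case: n F G => [|n] F G.
  by move=> [a Fa] [b Gb]; exists (a + b) => y; rewrite Fa Gb.
move=> [J1 [c1 [e1 [hc1 hF]]]] [J2 [c2 [e2 [hc2 hG]]]].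
exists (J1 + J2)%type,
  (fun j => match j with inl a => c1 a | inr b => c2 b end),
  (fun j => match j with inl a => e1 a | inr b => e2 b end); split; first by case.
by move=> y t; rewrite big_sumType hF hG.
Qed.

Lemma rpoly_mul n F G : rpoly n F -> rpoly n G -> rpoly n (fun y => F y * G y).
Proof.
elim: n F G => [|n IH] F G.
  by move=> [a Fa] [b Gb]; exists (a * b) => y; rewrite Fa Gb.
move=> [J1 [c1 [e1 [hc1 hF]]]] [J2 [c2 [e2 [hc2 hG]]]].
exists (J1 * J2)%type, (fun j y => c1 j.1 y * c2 j.2 y),
  (fun j => (e1 j.1 + e2 j.2)%N); split.
  move=> [a b] /=; apply: IH; [exact: hc1 | exact: hc2].
move=> y t; rewrite hF hG big_distrlr pair_big /=; apply: eq_bigr => -[a b] _ /=.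
by rewrite exprD mulrACA.
Qed.

Lemma rpoly_sum n (J : finType) (F : J -> Rpow R n -> R) :
  (forall j, rpoly n (F j)) -> rpoly n (fun y => \sum_(j : J) F j y).
Proof.
move=> hF; rewrite unlock /reducebig.
elim: (index_enum J) => [|a s IH] /=; [exact: rpoly_const | exact: rpoly_add].
Qed.

Lemma rpoly_coord n i : rpoly n (coord R n i).
Proof.
elim: n => [|n IH]; first by exists 0.
case: (eqVneq i n) => [->|ne].
  exists 'I_1, (fun _ _ => 1), (fun _ => 1%N); split; first by move=> _; exact: rpoly_const.
  by move=> y t; rewrite big_ord1 mul1r expr1 /= eqxx.
exists 'I_1, (fun _ => coord R n i), (fun _ => 0%N); split => // y t.
by rewrite big_ord1 expr0 mulr1 /= (negbTE ne).
Qed.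

Lemma rpoly_measurable n F : rpoly n F -> measurable_fun setT F.
Proof.
elim: n F => [|n IH] F.
  move=> [c Fc]; have -> : F = (fun _ => c) by apply/funext.
  exact: measurable_cst.
move=> [J [c [e [hc hF]]]].
have -> : F = (fun p : Rpow R n * R => \sum_(j : J) c j p.1 * p.2 ^+ e j).
  by apply/funext => -[y t]; exact: hF.
apply: measurable_sum => j; apply: measurable_realfun.measurable_funM.
  exact: measurableT_comp (IH _ (hc j)) measurable_fst.
exact: measurable_realfun.measurable_funX measurable_snd.
Qed.

Lemma rpoly_zeros_measurable {n F} : rpoly n F -> measurable [set y | F y = 0].
Proof.
move=> /rpoly_measurable mF; have := mF measurableT _ (measurable_set1 0).
by rewrite setTI.
Qed.

End RecursivePolynomials.

Section NullZeroSets.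
Context (R : realType) (mu : probability R R).
Hypothesis mu_atomless : forall a : R, mu [set a] = 0%E.

Lemma measurable_roots (p : {poly R}) : measurable [set t | p.[t] = 0].
Proof.
have mp : measurable_fun setT (fun t : R => p.[t]).
  have -> : (fun t : R => p.[t]) = (fun t => \sum_(i < size p) p`_i * t ^+ i).
    by apply/funext => t; rewrite horner_coef.
  apply: measurable_sum => i.
  apply: measurable_realfun.measurable_funM; first exact: measurable_cst.
  exact: measurable_realfun.measurable_funX.
by have := mp measurableT _ (measurable_set1 0); rewrite setTI.
Qed.

(* An atomless law does not charge the (finite) root set of a nonzero
   polynomial; by induction on the size, peeling off one root at a time. *)
Lemma mu_roots (p : {poly R}) : p != 0 -> mu [set t | p.[t] = 0] = 0%E.
Proof.
move: {2}(size p) (leqnn (size p)) => m; elim: m p => [|m IH] p hs p0.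
  by move: p0; rewrite -size_poly_eq0 -leqn0 hs.
have [[a pa]|nr] := pselect (exists a, p.[a] = 0); last first.
  have -> : [set t | p.[t] = 0] = set0.
    by apply/seteqP; split => // t /= pt; apply: nr; exists t.
  exact: measure0.
have /factor_theorem [q pq] : root p a by apply/rootP.
have q0 : q != 0 by apply: contra p0 => /eqP q0; rewrite pq q0 mul0r.
have sq : (size q <= m)%N.
  by move: hs; rewrite pq size_mul ?polyXsubC_eq0 // size_XsubC addn2.
have roots_sub : [set t | p.[t] = 0] `<=` [set a] `|` [set t | q.[t] = 0].
  move=> t /=; rewrite pq hornerM hornerXsubC => /eqP; rewrite mulf_eq0.
  by case/orP => /eqP h; [right | left; apply/eqP; rewrite -subr_eq0 h].
apply/eqP; rewrite eq_le measure_ge0 andbT.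
apply: (le_trans (le_measure _ _ _ roots_sub)); rewrite ?inE.
- exact: measurable_roots.
- by apply: measurableU; [exact: measurable_set1 | exact: measurable_roots].
apply: (le_trans (measureU2 _ (measurable_set1 a) (measurable_roots q))).
by apply: adde_le0; [rewrite -(mu_atomless a) | rewrite -(IH q sq q0)].
Qed.

(* Fubini for null sets: if nu does not charge Z and every section of E above
   a point outside Z is mu-null, then E is (nu \x mu)-null. *)
Lemma product_null_sections {d} {T : measurableType d} {nu : probability T R}
    {E : set (T * R)} {Z : set T} :
  measurable E -> measurable Z -> nu Z = 0%E ->
  (forall y, ~ Z y -> mu (xsection E y) = 0%E) -> (nu \x mu)%E E = 0%E.
Proof.
move=> mE mZ nuZ null_sec.
have sec_le y : (mu (xsection E y) <= (\1_Z y)%:E)%E.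
  rewrite indicE; have [yZ|yZ] := boolP (y \in Z).
    by rewrite probability_le1 //; exact: measurable_xsection.
  by rewrite null_sec // => Zy; move: yZ; rewrite mem_set.
apply/eqP; rewrite eq_le measure_ge0 andbT /= /product_measure1.
apply: (@le_trans _ _ (\int[nu]_(y in setT) (\1_Z y)%:E)%E).
  apply: ge0_le_integral => //; first exact: measurable_fun_xsection.
  - exact/measurable_realfun.measurable_EFinP/measurable_realfun.measurable_indic.
  - by move=> y _; exact: sec_le.
by rewrite integral_indic // setIT -nuZ; exact: lexx.
Qed.

(* The zero set of a polynomial function that does not vanish identically is
   mu^n-null: above every point where the leading coefficient (in the last
   variable) of a witness of non-vanishing is nonzero, the section is the root
   set of a nonzero polynomial, and the leading coefficient vanishes only on a
   null set by induction. *)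
Lemma rpoly_zeros_null n F : rpoly n F -> (exists y, F y != 0) ->
  pow_law R mu n [set y | F y = 0] = 0%E.
Proof.
elim: n F => [|n IH] F.
  move=> [c Fc] [y Fy]; have -> : [set y | F y = 0] = set0.
    by apply/seteqP; split => // z /= Fz; move: Fy; rewrite Fc -(Fc z) Fz eqxx.
  exact: measure0.
move=> rF [[y0 t0] Fy0]; have mS := rpoly_zeros_measurable rF.
case: rF => [J [c [e [hc hF]]]].
pose Py y := \sum_(j : J) c j y *: 'X^(e j) : {poly R}.
have PyE y t : (Py y).[t] = F (y, t).
  by rewrite hF horner_sum; apply: eq_bigr => j _; rewrite hornerZ hornerXn.
have Py0 : Py y0 != 0 by apply: contra Fy0 => /eqP h; rewrite -PyE h horner0.
pose k := (size (Py y0)).-1.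
pose C y := \sum_(j : J) c j y * (e j == k)%:R.
have CE y : (Py y)`_k = C y.
  by rewrite coef_sum; apply: eq_bigr => j _; rewrite coefZ coefXn eq_sym.
have rC : rpoly n C by apply: rpoly_sum => j; exact: rpoly_mul (hc j) (rpoly_const _ _).
have C0 : C y0 != 0 by rewrite -CE -lead_coefE lead_coef_eq0.
apply: (product_null_sections mS (rpoly_zeros_measurable rC)).
  by apply: IH => //; exists y0.
move=> y /eqP Cy; have -> : xsection [set z | F z = 0] y = [set t | (Py y).[t] = 0].
  by apply/seteqP; split => t; rewrite /xsection /= inE PyE.
by apply: mu_roots; apply: contra Cy => /eqP Py_eq0; rewrite -CE Py_eq0 coef0.
Qed.

End NullZeroSets.

Section PolynomialFunctions.
Context {R : realType} {I : Type}.

Inductive polyfun : ((I -> R) -> R) -> Prop :=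
  | polyfun_const c : polyfun (fun _ => c)
  | polyfun_coord i : polyfun (fun v => v i)
  | polyfun_add F G : polyfun F -> polyfun G -> polyfun (fun v => F v + G v)
  | polyfun_mul F G : polyfun F -> polyfun G -> polyfun (fun v => F v * G v).

Lemma polyfun_ext {F G} : polyfun F -> F =1 G -> polyfun G.
Proof. by move=> pF /funext <-. Qed.

Lemma polyfun_sum (J : finType) (F : J -> (I -> R) -> R) :
  (forall j, polyfun (F j)) -> polyfun (fun v => \sum_(j : J) F j v).
Proof.
move=> hF; rewrite unlock /reducebig.
elim: (index_enum J) => [|a s IH] /=; [exact: polyfun_const | exact: polyfun_add].
Qed.

Lemma polyfun_prod (J : finType) (F : J -> (I -> R) -> R) :
  (forall j, polyfun (F j)) -> polyfun (fun v => \prod_(j : J) F j v).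
Proof.
move=> hF; rewrite unlock /reducebig.
elim: (index_enum J) => [|a s IH] /=; [exact: polyfun_const | exact: polyfun_mul].
Qed.

Lemma polyfun_det K (A : (I -> R) -> 'M[R]_K) :
  (forall i j, polyfun (fun v => A v i j)) -> polyfun (fun v => \det (A v)).
Proof.
move=> hA; apply: polyfun_sum => s; apply: polyfun_mul; first exact: polyfun_const.
by apply: polyfun_prod => i; exact: hA.
Qed.

Lemma polyfun_rpoly F : polyfun F ->
  forall n (pos : I -> nat), rpoly n (fun y => F (fun i => coord R n (pos i) y)).
Proof.
move=> pF n pos; elim: pF => [c|i|F1 F2 _ rF1 _ rF2|F1 F2 _ rF1 _ rF2].
- exact: rpoly_const.
- exact: rpoly_coord.
- exact: rpoly_add.
- exact: rpoly_mul.
Qed.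

End PolynomialFunctions.

Section DiagonalSandwich.
Context {R : realType}.

(* The matrix of the linear map g |-> U *m diag_mx g *m V, whose output
   entries are indexed through rho : 'I_K -> 'I_p * 'I_q: column c holds the
   coefficients of the entry rho c (see [row_sandwich_mx]). *)
Definition sandwich_mx {K p q} (rho : 'I_K -> 'I_p * 'I_q)
    (U : 'M[R]_(p, K)) (V : 'M[R]_(K, q)) : 'M[R]_K :=
  \matrix_(k, c) (U (rho c).1 k * V k (rho c).2).

Lemma row_sandwich_mx {K p q} (rho : 'I_K -> 'I_p * 'I_q) (U : 'M[R]_(p, K))
    (V : 'M[R]_(K, q)) (g : 'rV[R]_K) c :
  (g *m sandwich_mx rho U V) 0 c = (U *m diag_mx g *m V) (rho c).1 (rho c).2.
Proof.
rewrite mul_mx_diag !mxE; apply: eq_bigr => k _; rewrite !mxE.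
by rewrite mulrCA mulrA.
Qed.

Lemma sandwich_mx_surj {K p q} {rho : 'I_K -> 'I_p * 'I_q} {rho' : 'I_p * 'I_q -> 'I_K} :
  cancel rho' rho -> forall U V, \det (sandwich_mx rho U V) != 0 ->
  forall B : 'M[R]_(p, q), exists g : 'rV[R]_K, U *m diag_mx g *m V = B.
Proof.
move=> rhoK U V hdet B.
have hu : sandwich_mx rho U V \in unitmx by rewrite unitmxE unitfE.
pose b : 'rV[R]_K := \row_c B (rho c).1 (rho c).2.
exists (b *m invmx (sandwich_mx rho U V)); apply/matrixP => i j.
have := row_sandwich_mx rho U V (b *m invmx (sandwich_mx rho U V)) (rho' (i, j)).
by rewrite mulmxKV // mxE rhoK => ->.
Qed.

Definition select_rows {K p q} (rho : 'I_K -> 'I_p * 'I_q) : 'M[R]_(p, K) :=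
  \matrix_(i, k) ((rho k).1 == i)%:R.
Definition select_cols {K p q} (rho : 'I_K -> 'I_p * 'I_q) : 'M[R]_(K, q) :=
  \matrix_(k, j) ((rho k).2 == j)%:R.

Lemma sandwich_mx_select {K p q} (rho : 'I_K -> 'I_p * 'I_q) :
  injective rho -> sandwich_mx rho (select_rows rho) (select_cols rho) = 1%:M.
Proof.
move=> rho_inj; apply/matrixP => k c; rewrite !mxE -natrM mulnb.
by rewrite -xpair_eqE -!surjective_pairing (inj_eq rho_inj).
Qed.

End DiagonalSandwich.

Section JointLaw.
Context (R : realType) (mu : probability R R).
Context (Ix : finType) (k0 : Ix) (dm : measure_display) (Omega : measurableType dm)
  (P : probability Omega R) (X : Ix -> Omega -> R)
  (hXm : forall k, measurable_fun setT (X k))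
  (hXlaw : forall k, has_law P (X k) mu)
  (hXind : mutually_independent P X).

(* The variables are listed as Xn 0, ..., Xn (N - 1) along [enum Ix]; k0 is
   only a default index. *)
Let N := #|Ix|.
Definition pos (k : Ix) : nat := index k (enum Ix).
Definition Xn (i : nat) : Omega -> R := X (nth k0 (enum Ix) i).

Definition Y n (w : Omega) : Rpow R n := pow_pt R n (fun i => Xn i w).

Definition tail_event n (B : nat -> set R) : set Omega :=
  [set w | forall i, (n <= i)%N -> (i < N)%N -> B i (Xn i w)].

Lemma pos_lt k : (pos k < N)%N.
Proof. by rewrite /pos /N cardE index_mem mem_enum. Qed.

Lemma nth_pos k : nth k0 (enum Ix) (pos k) = k.
Proof. by rewrite /pos nth_index // mem_enum. Qed.

Lemma pos_nth i : (i < N)%N -> pos (nth k0 (enum Ix) i) = i.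
Proof. by move=> iN; rewrite /pos index_uniq // ?enum_uniq // -cardE. Qed.

Lemma measurable_Xn_preimage i B : measurable B -> measurable (Xn i @^-1` B).
Proof. by move=> mB; rewrite -[X in measurable X]setTI; exact: hXm. Qed.

Lemma measurable_Y n : measurable_fun setT (Y n).
Proof.
elim: n => [|n IH]; first exact: measurable_cst.
exact: measurable_fun_pair IH (hXm _).
Qed.

Lemma measurable_tail_event n B :
  (forall i, measurable (B i)) -> measurable (tail_event n B).
Proof.
move=> mB.
have -> : tail_event n B =
    \bigcap_i (if (n <= i < N)%N then Xn i @^-1` B i else setT).
  apply/seteqP; split => w /=.
    by move=> H i _; case: ifP => // /andP[? ?]; exact: H.
  by move=> H i ni iN; have := H i Logic.I; rewrite ni iN.
by apply: bigcapT_measurable => i; case: ifP => // _; exact: measurable_Xn_preimage.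
Qed.

Lemma P_coord_events (s : nat -> bool) (B : nat -> set R) :
  (forall i, measurable (B i)) ->
  P [set w | forall i, s i -> (i < N)%N -> B i (Xn i w)] =
  (\prod_(k : Ix) (if s (pos k) then mu (B (pos k)) else 1))%E.
Proof.
move=> mB; pose B' k := if s (pos k) then B (pos k) else setT.
have mB' k : measurable (B' k) by rewrite /B'; case: ifP.
have -> : [set w | forall i, s i -> (i < N)%N -> B i (Xn i w)] =
    \bigcap_(k in [set: Ix]) (X k @^-1` B' k).
  apply/seteqP; split => w /=.
    move=> H k _; rewrite /B'; case: ifP => // sk.
    by have := H (pos k) sk (pos_lt k); rewrite /Xn nth_pos.
  move=> H i si iN; have := H (nth k0 (enum Ix) i) Logic.I.
  by rewrite /B' pos_nth // si.
rewrite hXind //; apply: eq_bigr => k _; rewrite /B'; case: ifP => _.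
  exact: hXlaw.
by rewrite preimage_setT probability_setT.
Qed.

Definition update (B : nat -> set R) n B0 := fun i => if i == n then B0 else B i.

Lemma tail_event_split n B0 B : (n < N)%N ->
  Xn n @^-1` B0 `&` tail_event n.+1 B = tail_event n (update B n B0).
Proof.
move=> nN; apply/seteqP; split => w /=.
  move=> [H0 H] i ni iN; rewrite /update; case: eqP => [->//|/eqP ne].
  by apply: H => //; rewrite ltn_neqAle eq_sym ne.
move=> H; split; first by have := H n (leqnn n) nN; rewrite /update eqxx.
move=> i ni iN; have := H i (ltnW ni) iN; rewrite /update; case: eqP => // ein.
by move: ni; rewrite ein ltnn.
Qed.

Lemma P_tail_event_cons n B0 B : (forall i, measurable (B i)) -> measurable B0 ->
  (n < N)%N ->
  P (Xn n @^-1` B0 `&` tail_event n.+1 B) = (mu B0 * P (tail_event n.+1 B))%E.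
Proof.
move=> mB mB0 nN; rewrite tail_event_split //.
have mB1 i : measurable (update B n B0 i) by rewrite /update; case: ifP.
rewrite /tail_event (P_coord_events (fun i => n <= i)%N) //.
rewrite (P_coord_events (fun i => n < i)%N) //.
pose kn := nth k0 (enum Ix) n.
rewrite [in LHS](bigD1 kn) // [in RHS](bigD1 kn) //= /kn pos_nth // leqnn ltnn.
rewrite /update eqxx mul1e; congr (_ * _)%E; apply: eq_bigr => k kkn.
have pn : pos k != n by apply: contra kkn => /eqP <-; rewrite nth_pos.
by rewrite leq_eqVlt eq_sym (negbTE pn).
Qed.

(* The law of Y n, jointly with any tail event: both sides are measures in A
   that agree on measurable rectangles, which form a pi-system generating the
   product sigma-algebra. *)
Lemma joint_law n : (n <= N)%N -> forall B, (forall i, measurable (B i)) ->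
  forall A, measurable A ->
  P (Y n @^-1` A `&` tail_event n B) = (pow_law R mu n A * P (tail_event n B))%E.
Proof.
elim: n => [_ B mB A mA|n IH nN B mB E mE].
  rewrite /= diracE; have [A0|A0] := boolP ((0:R) \in A).
    have -> : Y 0 @^-1` A = setT.
      by apply/seteqP; split => // w _; move: A0; rewrite inE.
    by rewrite setTI mul1e.
  have -> : Y 0 @^-1` A = set0.
    by apply/seteqP; split => // w /= Aw; move: A0; rewrite mem_set.
  by rewrite set0I measure0 mul0e.
have mD := @measurable_tail_event n.+1 B mB.
have c0 : (0 <= fine (P (tail_event n.+1 B)))%R by apply/fine_ge0/measure_ge0.
have cE : (fine (P (tail_event n.+1 B)))%:E = P (tail_event n.+1 B).
  by rewrite fineK // fin_num_measure.
pose m1 := pushforward (mrestr P mD) (Y n.+1).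
pose m2 := mscale (NngNum c0) (pow_law R mu n.+1).
pose G := [set A `*` B | A in @measurable _ (Rpow R n) & B in @measurable _ R].
have mG : @measurable _ (Rpow R n.+1) = <<s G >>.
  exact: (@measurable_prod_measurableType _ _ (Rpow R n) R).
have GI : setI_closed G.
  move=> _ _ [A1 mA1 [B1 mB1 <-]] [A2 mA2 [B2 mB2 <-]].
  exists (A1 `&` A2); first exact: measurableI.
  by exists (B1 `&` B2); [exact: measurableI | rewrite setXI].
have GT : forall k : nat, G setT.
  by move=> _; exists setT => //; exists setT => //; rewrite setXTT.
have cover : \bigcup_(k : nat) (setT : set (Rpow R n.+1)) = setT.
  by apply/seteqP; split => // x _; exists 0%N.
have m12 A : G A -> m1 A = m2 A.
  move=> [A1 mA1 [B0 mB0 <-]]; rewrite /m1 /m2 /pushforward /mrestr /mscale /=.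
  have -> : Y n.+1 @^-1` (A1 `*` B0) = Y n @^-1` A1 `&` Xn n @^-1` B0 by [].
  have mB1 i : measurable (update B n B0 i) by rewrite /update; case: ifP.
  rewrite -setIA tail_event_split // (IH (ltnW nN) _ mB1) //.
  rewrite -tail_event_split // P_tail_event_cons // product_measure1E // cE.
  by rewrite [RHS]muleC -muleA.
have m1_fin (k : nat) : (m1 setT < +oo)%E.
  apply: (le_lt_trans (probability_le1 P _)); last exact: ltry.
  by apply: measurableI => //; rewrite -[X in measurable X]setTI; exact: measurable_Y.
have -> : P (Y n.+1 @^-1` E `&` tail_event n.+1 B) = m2 E.
  have := @measure_unique _ R (Rpow R n.+1) G (fun _ => setT) mG GI GT cover m1 m2 m12
    m1_fin E mE.
  by apply; exact: measurable_Y.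
by rewrite /m2 /mscale /= cE muleC.
Qed.

Lemma ae_polyfun_neq0 (F : (Ix -> R) -> R) :
  (forall a : R, mu [set a] = 0%E) -> polyfun F -> (exists v, F v != 0) ->
  {ae P, forall w, F (fun k => X k w) != 0}.
Proof.
move=> mu_atomless pF [v Fv].
pose G y := F (fun k => coord R N (pos k) y).
have rG : rpoly N G by exact: polyfun_rpoly.
have GY w : G (Y N w) = F (fun k => X k w).
  by congr F; apply/funext => k; rewrite coord_pow_pt ?pos_lt // /Xn nth_pos.
have mZ : measurable [set y | G y = 0] := rpoly_zeros_measurable rG.
have G_neq0 : exists y, G y != 0.
  exists (pow_pt R N (fun i => v (nth k0 (enum Ix) i))); rewrite /G.
  by congr (F _ != 0): Fv; apply/funext => k; rewrite coord_pow_pt ?pos_lt ?nth_pos.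
exists (Y N @^-1` [set y | G y = 0]); split.
- by rewrite -[X in measurable X]setTI; exact: measurable_Y.
- have := @joint_law N (leqnn N) (fun _ => setT) (fun _ => measurableT) _ mZ.
  have -> : tail_event N (fun _ => setT) = setT.
    by apply/seteqP; split => // w _ i h1 h2; move: (leq_trans h1 h2); rewrite ltnn.
  rewrite setIT probability_setT mule1 => ->.
  exact: rpoly_zeros_null.
- by move=> w /= /negP; rewrite negbK -GY => /eqP.
Qed.

Lemma ae_sandwich_surj K p q (rho : 'I_K -> 'I_p * 'I_q)
    (U : (Ix -> R) -> 'M[R]_(p, K)) (V : (Ix -> R) -> 'M[R]_(K, q)) :
  (forall a : R, mu [set a] = 0%E) -> bijective rho ->
  (forall i k, polyfun (fun v => U v i k)) ->
  (forall k j, polyfun (fun v => V v k j)) ->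
  (exists v, U v = select_rows rho /\ V v = select_cols rho) ->
  {ae P, forall w, forall B : 'M[R]_(p, q), exists g : 'rV[R]_K,
     U (fun k => X k w) *m diag_mx g *m V (fun k => X k w) = B}.
Proof.
move=> mu_atomless [rho' rhoK rhoK'] pU pV [v0 [Uv0 Vv0]].
have pD : polyfun (fun v => \det (sandwich_mx rho (U v) (V v))).
  apply: polyfun_det => k c.
  apply: (polyfun_ext (polyfun_mul _ _ (pU _ k) (pV k _))) => v.
  by rewrite mxE.
have D0 : exists v, \det (sandwich_mx rho (U v) (V v)) != 0.
  exists v0; rewrite Uv0 Vv0 sandwich_mx_select ?det1 ?oner_neq0 //.
  exact: can_inj rhoK.
move: (ae_polyfun_neq0 _ mu_atomless pD D0).
by apply: filterS => w /= hdet; exact: (sandwich_mx_surj rhoK' _ _ hdet).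
Qed.

End JointLaw.

Section ReluNetworks.
Context {R : realType}.

Lemma relu_affine_bias {m n} (M : 'M[R]_(m, n)) {K : R} : 0 <= K ->
  exists (b : 'cV[R]_m) (K' : R), 0 <= K' /\ forall x : 'cV[R]_n,
    (forall j, `|x j 0| <= K) ->
    relu_vec (M *m x + b) = M *m x + b /\ (forall i, `|(M *m x + b) i 0| <= K').
Proof.
move=> K0; pose bb i := K * \sum_j `|M i j|.
have bb0 i : 0 <= bb i by rewrite mulr_ge0 // sumr_ge0.
exists (\col_i bb i), (2 * \sum_i bb i); split; first by rewrite mulr_ge0 // sumr_ge0.
move=> x hx.
have hM i : `|(M *m x) i 0| <= bb i.
  rewrite mxE (le_trans (ler_norm_sum _ _ _)) // /bb mulr_sumr; apply: ler_sum => j _.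
  by rewrite normrM mulrC ler_wpM2r.
have out_range i : 0 <= (M *m x + \col_i bb i) i 0 <= 2 * bb i.
  rewrite [_ i 0]mxE [X in _ + X]mxE; move: (hM i); rewrite ler_norml.
  by move=> /andP[h1 h2]; apply/andP; split; lra.
split.
  apply/matrixP => i j; rewrite (ord1 j) mxE; apply: max_l.
  by case/andP: (out_range i).
move=> i; case/andP: (out_range i) => p1 p2; rewrite ger0_norm //.
apply: (le_trans p2); rewrite ler_pM2l ?ltr0n //.
by rewrite (bigD1 i) //= lerDl sumr_ge0.
Qed.

Lemma unit_ball_coord {n} (x : 'cV[R]_n) j : sqnorm x <= 1 -> `|x j 0| <= 1.
Proof.
move=> hx; have h : x j 0 ^+ 2 <= 1.
  apply: le_trans hx; rewrite /sqnorm (bigD1 j) //= lerDl sumr_ge0 // => i _.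
  exact: sqr_ge0.
rewrite ler_norml; apply/andP; split; nra.
Qed.

(* If the middle products W2 diag(g1) W1 and W4 diag(g3) W3 factor
   diag(g* ) W*, the four-layer network realises the target on the unit
   ball: the first three ReLUs are made inactive by large biases (g2 = g4 =
   1) and the last bias absorbs the accumulated constant. *)
Lemma four_layer_realizes d r (W1 : 'M[R]_(d * r, d)) (W2 : 'M[R]_(r, d * r))
  (W3 : 'M[R]_(d * r, r)) (W4 : 'M[R]_(d, d * r))
  (gstar : 'rV[R]_d) (Wstar : 'M[R]_d) (bstar : 'cV[R]_d)
  (g1 g3 : 'rV[R]_(d * r)) (A : 'M[R]_(d, r)) (B : 'M[R]_(r, d)) :
  W2 *m diag_mx g1 *m W1 = B -> W4 *m diag_mx g3 *m W3 = A ->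
  A *m B = diag_mx gstar *m Wstar ->
  exists (g1 : 'rV[R]_(d * r)) (g2 : 'rV[R]_r) (g3 : 'rV[R]_(d * r))
         (g4 : 'rV[R]_d)
         (b1 : 'cV[R]_(d * r)) (b2 : 'cV[R]_r) (b3 : 'cV[R]_(d * r))
         (b4 : 'cV[R]_d),
    forall x : 'cV[R]_d, sqnorm x <= 1 ->
      nlayer g4 W4 b4 (nlayer g3 W3 b3 (nlayer g2 W2 b2 (nlayer g1 W1 b1 x)))
      = nlayer gstar Wstar bstar x.
Proof.
move=> hB hA hAB.
pose M1 := diag_mx g1 *m W1; pose M2 := diag_mx (const_mx 1) *m W2.
pose M3 := diag_mx g3 *m W3; pose M4 := diag_mx (const_mx 1) *m W4.
have [b1 [K1 [K10 h1]]] := relu_affine_bias M1 ler01.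
have [b2 [K2 [K20 h2]]] := relu_affine_bias M2 K10.
have [b3 [K3 [K30 h3]]] := relu_affine_bias M3 K20.
pose c := M4 *m (M3 *m (M2 *m b1 + b2) + b3).
exists g1, (const_mx 1), g3, (const_mx 1), b1, b2, b3, (bstar - c) => x hx.
have [e1 k1] := h1 x (fun j => unit_ball_coord x j hx).
have [e2 k2] := h2 _ k1.
have [e3 k3] := h3 _ k2.
rewrite /nlayer -/M1 -/M2 -/M3 -/M4 e1 e2 e3; congr relu_vec.
have prodM : M4 *m M3 *m M2 *m M1 = diag_mx gstar *m Wstar.
  rewrite /M4 /M3 /M2 /M1 !diag_const_mx !mul_scalar_mx !scale1r -hAB -hA -hB.
  by rewrite !mulmxA.
have -> : M4 *m (M3 *m (M2 *m (M1 *m x + b1) + b2) + b3) =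
    M4 *m M3 *m M2 *m M1 *m x + c by rewrite /c !mulmxDr !mulmxA !addrA.
by rewrite prodM -addrA [c + _]addrC subrK.
Qed.

Lemma rank_factorization {m n r} {W : 'M[R]_(m, n)} : \rank W = r ->
  exists (C : 'M[R]_(m, r)) (B : 'M[R]_(r, n)), C *m B = W.
Proof. by move=> <-; exists (col_base W), (row_base W); exact: mulmx_base. Qed.

Lemma continuous_law_atomless {mu : probability R R} :
  continuous_bounded_law mu -> forall a : R, mu [set a] = 0%E.
Proof.
move=> [mu_ac _] a; apply: (mu_ac _ _ _ (measurable_set1 a) (@subset_refl _ _)).
move=> A mA Aa; apply/eqP; rewrite eq_le measure_ge0 andbT -(lebesgue_measure_set1 a).
by apply: le_measure; rewrite ?inE //; exact: measurable_set1.
Qed.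

End ReluNetworks.

Definition ord_pair d r (c : 'I_(d * r)) : 'I_d * 'I_r :=
  enum_val (cast_ord (esym (mxvec_cast d r)) c).

Lemma ord_pair_bij d r : bijective (@ord_pair d r).
Proof.
exists (fun p => cast_ord (mxvec_cast d r) (enum_rank p)) => c.
  by rewrite /ord_pair enum_valK cast_ordKV.
by rewrite /ord_pair cast_ordK enum_rankK.
Qed.

Lemma swap_bij {C A B : Type} {f : C -> A * B} :
  bijective f -> bijective (fun c => ((f c).2, (f c).1)).
Proof.
case=> g fK gK; exists (fun p => g (p.2, p.1)) => [c | [a b]] /=.
  by rewrite -surjective_pairing fK.
by rewrite gK.
Qed.

Section RandomWeights.
Context {R : realType} {d r : nat} (d_gt0 : (0 < d)%N) (r_gt0 : (0 < r)%N).
Context {dm : measure_display} {Omega : measurableType dm} {P : probability Omega R}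
  {mu : probability R R} (mu_atomless : forall a : R, mu [set a] = 0%E)
  {X : entry_idx d r -> Omega -> R}
  (hXm : forall k, measurable_fun setT (X k))
  (hXlaw : forall k, has_law P (X k) mu)
  (hXind : mutually_independent P X).

Let ev (k : entry_idx d r) (v : entry_idx d r -> R) := v k.

Let sig := @ord_pair d r.
Let rho (c : 'I_(d * r)) := ((sig c).2, (sig c).1).

(* Entries at which both diagonal sandwiches W2 diag(.) W1 and W4 diag(.) W3
   have the identity as coefficient matrix. *)
Let select_entries (k : entry_idx d r) : R := match k with
  | inl (inl (k, j)) => select_cols rho k j | inl (inr (i, k)) => select_rows rho i k
  | inr (inl (k, j)) => select_cols sig k j | inr (inr (i, k)) => select_rows sig i k
  end.

Let entry_polyfun m n (f : 'I_m -> 'I_n -> entry_idx d r) i j :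
  polyfun (fun v => (\matrix_(i, j) v (f i j) : 'M[R]_(m, n)) i j).
Proof. by apply: (polyfun_ext (polyfun_coord (f i j))) => v; rewrite mxE. Qed.

Lemma ae_weights_onto : {ae P, forall w,
  (forall B : 'M[R]_(r, d), exists g, W2_of X w *m diag_mx g *m W1_of X w = B) /\
  (forall A : 'M[R]_(d, r), exists g, W4_of X w *m diag_mx g *m W3_of X w = A)}.
Proof.
have dr_gt0 : (0 < d * r)%N by rewrite muln_gt0 d_gt0.
pose k0 : entry_idx d r := inl (inl (Ordinal dr_gt0, Ordinal d_gt0)).
have [W2_sel W1_sel W4_sel W3_sel] : [/\ W2_of ev select_entries = select_rows rho,
    W1_of ev select_entries = select_cols rho,
    W4_of ev select_entries = select_rows sig &
    W3_of ev select_entries = select_cols sig].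
  by split; apply/matrixP => i j; rewrite mxE.
have ae21 := @ae_sandwich_surj R mu _ k0 dm Omega P X hXm hXlaw hXind _ _ _ rho
  (W2_of ev) (W1_of ev) mu_atomless (swap_bij (ord_pair_bij d r))
  (fun i j => entry_polyfun _ _ _ i j) (fun i j => entry_polyfun _ _ _ i j)
  (ex_intro _ select_entries (conj W2_sel W1_sel)).
have ae43 := @ae_sandwich_surj R mu _ k0 dm Omega P X hXm hXlaw hXind _ _ _ sig
  (W4_of ev) (W3_of ev) mu_atomless (ord_pair_bij d r)
  (fun i j => entry_polyfun _ _ _ i j) (fun i j => entry_polyfun _ _ _ i j)
  (ex_intro _ select_entries (conj W4_sel W3_sel)).
by apply: filterS2 ae21 ae43 => w.
Qed.

End RandomWeights.

Theorem mainTheorem2 (R : realType) (d r : nat) (hd : (2 <= d)%N)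
  (hr1 : (1 <= r)%N) (hrd : (r < d)%N)
  (gstar : 'rV[R]_d) (Wstar : 'M[R]_d) (bstar : 'cV[R]_d)
  (hrank : \rank Wstar = r)
  (dm : measure_display) (Omega : measurableType dm) (P : probability Omega R)
  (mu : probability R R) (hmu : continuous_bounded_law mu)
  (X : entry_idx d r -> Omega -> R)
  (hXm : forall k, measurable_fun setT (X k))
  (hXlaw : forall k, has_law P (X k) mu)
  (hXind : mutually_independent P X) :
  {ae P, forall w : Omega,
    exists (g1 : 'rV[R]_(d * r)) (g2 : 'rV[R]_r) (g3 : 'rV[R]_(d * r))
           (g4 : 'rV[R]_d)
           (b1 : 'cV[R]_(d * r)) (b2 : 'cV[R]_r) (b3 : 'cV[R]_(d * r))
           (b4 : 'cV[R]_d),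
    forall x : 'cV[R]_d, sqnorm x <= 1 ->
      nlayer g4 (W4_of X w) b4
        (nlayer g3 (W3_of X w) b3
          (nlayer g2 (W2_of X w) b2
            (nlayer g1 (W1_of X w) b1 x)))
      = nlayer gstar Wstar bstar x}.
Proof.
have [C [B CB]] := rank_factorization hrank.
have := ae_weights_onto (ltnW hd) hr1 (continuous_law_atomless hmu) hXm hXlaw hXind.
apply: filterS => w [/(_ B) [g1 h1] /(_ (diag_mx gstar *m C)) [g3 h3]].
by apply: four_layer_realizes h1 h3 _; rewrite -mulmxA CB.
Qed.
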